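(* Let $X$ be a finite set with $n$ elements. For all functions $f,g:X\to X$, \[\deg(f\circ g)\leq\sqrt{n}\,\sqrt{\deg(f)}\,\deg(g).\] Furthermore, equality holds if and only if $f$ is a constant function and $g$ is a bijection.
   Context: For finite sets $X,Y$ and a function $f:X\to Y$, the degree of $f$ is $\deg(f)=\frac{1}{|X|}\sum_{y\in Y}|f^{-1}(y)|^2$. *)

From HB Require Import structures.
From mathcomp Require Import all_boot all_order all_algebra.
Set Implicit Arguments. Unset Strict Implicit. Unset Printing Implicit Defensive.
Import Order.TTheory GRing.Theory Num.Theory.
Local Open Scope ring_scope.

Definition deg (R : rcfType) (X Y : finType) (f : X -> Y) : R :=
  (#|X|%:R)^-1 * \sum_(y : Y) (#|[set x | f x == y]|%:R) ^+ 2.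

Definition constant_fun (X Y : Type) (f : X -> Y) : Prop :=
  exists c : Y, forall x : X, f x = c.

From HB Require Import structures.
From mathcomp Require Import all_boot all_order all_algebra.
From mathcomp Require Import zify.
Import Order.TTheory GRing.Theory Num.Theory.
Set Implicit Arguments. Unset Strict Implicit. Unset Printing Implicit Defensive.

(* Write S(h) = sum_y |h^-1(y)|^2 (the number of pairs x, x' with h x = h x',
   hence the name [collisions]), so that deg h = S(h) / n.  The fiber of
   f o g over z is the union of the fibers of g over the fiber of f over z, so
   by Cauchy-Schwarz |(f o g)^-1(z)|^2 <= |f^-1(z)| * sum_(y in f^-1(z)) |g^-1(y)|^2.
   Bounding |f^-1(z)| by the largest fiber M of f and summing over z gives
   S(f o g) <= M S(g) <= sqrt(S(f)) S(g).  Equality forces M^2 = S(f), i.e. f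
   has a single nonempty fiber; then S(f o g) = S(f) = n^2, hence S(g) = n,
   which means that g is injective. *)

Lemma leq_sqr_sum (I : finType) (A : {pred I}) (a : I -> nat) :
  (\sum_(i in A) a i) ^ 2 <= #|A| * \sum_(i in A) a i ^ 2.
Proof.
have -> : (\sum_(i in A) a i) ^ 2 = \sum_(i in A) \sum_(j in A) a i * a j.
  by rewrite -mulnn big_distrl; apply: eq_bigr => i _; rewrite big_distrr.
have Ej : #|A| * \sum_(i in A) a i ^ 2 = \sum_(i in A) \sum_(j in A) a j ^ 2.
  by rewrite -sum1_card big_distrl; apply: eq_bigr => i _; rewrite /= mul1n.
have Ei : #|A| * \sum_(i in A) a i ^ 2 = \sum_(i in A) \sum_(j in A) a i ^ 2.
  rewrite mulnC big_distrl; apply: eq_bigr => i _ /=.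
  by rewrite -sum1_card big_distrr; apply: eq_bigr => j _ /=; rewrite muln1.
rewrite -leq_double -2!addnn {1}Ei Ej -!big_split /=.
apply: leq_sum => i _; rewrite -!big_split /=; apply: leq_sum => j _.
by rewrite addnn -mul2n nat_Cauchy.
Qed.

Lemma leq_sqr (k : nat) : k <= k ^ 2.
Proof. by case: k => // k; rewrite expnS leq_pmulr ?expn_gt0. Qed.

Definition fiber (X Y : finType) (h : X -> Y) (y : Y) : {set X} := [set x | h x == y].

Lemma in_fiber (X Y : finType) (h : X -> Y) y x : (x \in fiber h y) = (h x == y).
Proof. by rewrite inE. Qed.

Definition collisions (X Y : finType) (h : X -> Y) : nat := \sum_y #|fiber h y| ^ 2.

Definition max_fiber (X Y : finType) (h : X -> Y) : nat := \max_y #|fiber h y|.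

Lemma deg_collisions (R : rcfType) (X Y : finType) (h : X -> Y) :
  deg R h = ((#|X|%:R)^-1 * (collisions h)%:R)%R.
Proof.
rewrite /deg /collisions natr_sum; congr (_ * _)%R.
by apply: eq_bigr => y _; rewrite natrX.
Qed.

Section Fibers.

Variables X Y : finType.

Lemma partition_fibers (h : X -> Y) (F : X -> nat) :
  \sum_x F x = \sum_y \sum_(x in fiber h y) F x.
Proof.
rewrite (partition_big h predT) //; apply: eq_bigr => y _.
by apply: eq_bigl => x; rewrite in_fiber.
Qed.

Lemma sum_card_fiber (h : X -> Y) : \sum_y #|fiber h y| = #|X|.
Proof.
by rewrite -sum1_card (partition_fibers h); apply: eq_bigr => y _; rewrite sum1_card.
Qed.

Lemma card_le_collisions (h : X -> Y) : #|X| <= collisions h.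
Proof.
by rewrite -(sum_card_fiber h); apply: leq_sum => y _; apply: leq_sqr.
Qed.

Lemma collisions_const (h : X -> Y) c : (forall x, h x = c) -> collisions h = #|X| ^ 2.
Proof.
move=> hc; rewrite /collisions (bigD1 c) //= big1 ?addn0 => [|y yc].
  by congr (_ ^ 2); apply: eq_card => x; rewrite in_fiber hc eqxx.
apply/eqP; rewrite expn_eq0 andbT cards_eq0; apply/eqP/setP => x.
by rewrite in_fiber inE hc eq_sym (negbTE yc).
Qed.

Lemma collisions_eq_card (h : X -> Y) : collisions h = #|X| <-> injective h.
Proof.
split=> [S_eq | h_inj].
  have [_] := leqif_sum (fun y (_ : true) => leqif_eq (leq_sqr #|fiber h y|)).
  rewrite sum_card_fiber -S_eq eqxx => /esym/forall_inP fib_le1 x1 x2 e.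
  have /card_le1_eqP fib_eq : #|fiber h (h x1)| <= 1.
    by move: (fib_le1 (h x1) isT) => /eqP; set k := #|_|; nia.
  by apply: fib_eq; rewrite in_fiber ?e eqxx.
rewrite -[RHS](sum_card_fiber h); apply: eq_bigr => y _.
have : #|fiber h y| <= 1.
  by apply/card_le1_eqP => x1 x2; rewrite !in_fiber => /eqP <- /eqP /h_inj.
by case: #|_| => [|[|k]].
Qed.

Lemma sqr_max_fiber_le (h : X -> Y) : max_fiber h ^ 2 <= collisions h.
Proof.
apply: (big_ind (fun m => m ^ 2 <= collisions h)) => // [m1 m2 le1 le2 | y _].
  by case: (leqP m1 m2).
by rewrite /collisions (bigD1 y) //= leq_addr.
Qed.

Lemma sqr_max_fiber_eq (h : X -> Y) :
  max_fiber h ^ 2 = collisions h -> forall x x', h x = h x'.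
Proof.
move=> M_eq x.
have Y_gt0 : 0 < #|Y| by apply/card_gt0P; exists (h x).
have [y0 M_y0] := bigop.eq_bigmax (fun y => #|fiber h y|) Y_gt0.
suff to_y0 x' : h x' = y0 by move=> x'; rewrite !to_y0.
move: M_eq; rewrite /max_fiber M_y0 /collisions (bigD1 y0) //= => /eqP.
rewrite -{1}[_ ^ 2]addn0 eqn_add2l eq_sym sum_nat_eq0 => /forall_inP fib_empty.
apply/eqP; apply: contraT => ne.
move: (fib_empty (h x') ne); rewrite expn_eq0 andbT cards_eq0 => /eqP/setP/(_ x').
by rewrite in_fiber inE eqxx.
Qed.

End Fibers.

Section Composition.

Variables (X Y Z : finType) (g : X -> Y) (f : Y -> Z).

Lemma card_fiber_comp z :
  #|fiber (f \o g) z| = \sum_(y in fiber f z) #|fiber g y|.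
Proof.
rewrite -sum1_card (partition_big g (fun y => y \in fiber f z)) => [|x].
  apply: eq_bigr => y; rewrite in_fiber => /eqP fy; rewrite -sum1_card.
  apply: eq_bigl => x; rewrite !in_fiber /=.
  by case: (g x =P y) => [->|]; rewrite ?andbT ?andbF ?fy ?eqxx.
by rewrite !in_fiber.
Qed.

Lemma collisions_comp_le : collisions (f \o g) <= max_fiber f * collisions g.
Proof.
rewrite /collisions (partition_fibers f) big_distrr; apply: leq_sum => z _.
rewrite card_fiber_comp; apply: leq_trans (leq_sqr_sum _ _) _.
by rewrite leq_mul2r leq_bigmax orbT.
Qed.

Variable R : rcfType.
Local Open Scope ring_scope.

Lemma max_fiber_le_sqrt : (max_fiber f)%:R <= Num.sqrt (collisions f)%:R :> R.
Proof.
rewrite -[_%:R]ger0_norm ?ler0n // -sqrtr_sqr ler_sqrt ?ler0n //.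
by rewrite -natrX ler_nat sqr_max_fiber_le.
Qed.

Lemma collisions_comp_ler :
  (collisions (f \o g))%:R <= Num.sqrt (collisions f)%:R * (collisions g)%:R :> R.
Proof.
apply: (@le_trans _ _ (max_fiber f * collisions g)%N%:R).
  by rewrite ler_nat collisions_comp_le.
by rewrite natrM ler_wpM2r ?ler0n ?max_fiber_le_sqrt.
Qed.

Lemma collisions_comp_eqr_constant : (0 < #|X|)%N ->
  (collisions (f \o g))%:R = Num.sqrt (collisions f)%:R * (collisions g)%:R :> R ->
  forall y y', f y = f y'.
Proof.
move=> X_gt0 S_eq; apply: sqr_max_fiber_eq; apply/eqP; rewrite eqn_leq sqr_max_fiber_le.
have Sg_gt0 : (0 : R) < (collisions g)%:R.
  by rewrite ltr0n (leq_trans X_gt0) ?card_le_collisions.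
have sqrt_le_M : Num.sqrt (collisions f)%:R <= (max_fiber f)%:R :> R.
  by rewrite -(ler_pM2r Sg_gt0) -S_eq -natrM ler_nat collisions_comp_le.
rewrite -(ler_nat R) natrX -[X in X <= _](sqr_sqrtr (ler0n R _)).
by rewrite ler_pXn2r ?nnegrE ?sqrtr_ge0 ?ler0n.
Qed.

End Composition.

Local Open Scope ring_scope.

Lemma collisions_comp_eqr_iff (R : rcfType) (X : finType) (f g : X -> X) :
  (0 < #|X|)%N ->
  (collisions (f \o g))%:R = Num.sqrt (collisions f)%:R * (collisions g)%:R :> R <->
  constant_fun f /\ bijective g.
Proof.
move=> X_gt0; split=> [S_eq | [[c f_c] g_bij]].
  have /card_gt0P [x0 _] := X_gt0.
  have f_c x : f x = f x0 := collisions_comp_eqr_constant X_gt0 S_eq x x0.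
  split; first by exists (f x0).
  apply/injF_bij/collisions_eq_card; move: S_eq.
  rewrite (collisions_const (h := f \o g) (fun x => f_c (g x))) (collisions_const f_c).
  rewrite natrX sqrtr_sqr ger0_norm ?ler0n // -natrM -natrX => /eqP.
  by rewrite eqr_nat -mulnn eqn_pmul2l // => /eqP.
rewrite (collisions_const (h := f \o g) (fun x => f_c (g x))) (collisions_const f_c).
have -> : collisions g = #|X| by apply/collisions_eq_card/bij_inj.
by rewrite natrX sqrtr_sqr ger0_norm ?ler0n // expr2.
Qed.

Theorem mainTheorem2 (R : rcfType) (X : finType) (n : nat)
  (hn : #|X| = n) (hpos : (0 < n)%N) (f g : X -> X) :
  deg R (f \o g) <= Num.sqrt (n%:R) * Num.sqrt (deg R f) * deg R g /\
  (deg R (f \o g) = Num.sqrt (n%:R) * Num.sqrt (deg R f) * deg R g <->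
     constant_fun f /\ bijective g).
Proof.
have n_gt0 : (0 : R) < n%:R by rewrite ltr0n.
have -> : Num.sqrt n%:R * Num.sqrt (deg R f) * deg R g =
    n%:R^-1 * (Num.sqrt (collisions f)%:R * (collisions g)%:R).
  rewrite !deg_collisions hn -sqrtrM ?ler0n // (mulrA n%:R) mulfV ?gt_eqF //.
  by rewrite mul1r mulrCA mulrA.
rewrite deg_collisions hn ler_pM2l ?invr_gt0 // collisions_comp_ler; split=> //.
rewrite -(collisions_comp_eqr_iff R f g) ?hn //.
by split=> [/(mulfI (invr_neq0 (lt0r_neq0 n_gt0))) | ->].
Qed.
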